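(* Let $k \geq 1$, let $r > 0$, $\gamma' \geq 0$, $\gamma \geq 12 k$, let $T \in \mathbb{N}$, and let $K_1, \dots, K_T$ be convex subsets of $\mathbb{R}^d$. Let $V \subset \mathbb{R}^d$ be a linear subspace of dimension $d-k$. Consider the cylinder $C = \{y \in \mathbb{R}^d : \|P_V y\| \leq \gamma' r\}$ and let \[ \tilde{\Omega} = \Big\{ y \in C \;:\; \exists (y_t)_{t \in \{1,\dots,T\}} \text{ with } y_T = y,\ y_t \in K_t \cap C \text{ for all } t, \text{ and } \sum_{t=1}^{T-1} \|y_t - y_{t+1}\| \leq r \Big\}. \] Assume that $\mathbb{S} := \{\theta \in V^{\perp} : \|\theta\| = \gamma r\} \subset P_{V^{\perp}} \tilde{\Omega}$. Then there exists a sequence $(Y_t)_{t \in \{1,\dots,T\}}$ with $Y_t \in K_t \cap V$ for all $t$ and \[ \sum_{t=1}^{T-1} \|Y_t - Y_{t+1}\| \leq \left(1 + \frac{2 + 4\gamma'}{\gamma}\, k\right) r. \]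
   Context: $\|\cdot\|$ is the Euclidean norm on $\mathbb{R}^d$, $V^{\perp}$ is the orthogonal complement of $V$, and $P_W$ denotes the orthogonal projection onto a subspace $W$. *)

From HB Require Import structures.
From mathcomp Require Import all_boot all_order all_algebra.
Set Implicit Arguments. Unset Strict Implicit. Unset Printing Implicit Defensive.
Import Order.TTheory GRing.Theory Num.Theory.
Local Open Scope ring_scope.

(* Vectors of R^d are row vectors 'rV[R]_d; subspaces are row spaces of
   square matrices 'M[R]_d (mxalgebra), membership (v <= W)%MS. *)

Definition enorm (R : rcfType) (d : nat) (v : 'rV[R]_d) : R :=
  Num.sqrt (\sum_(i < d) v 0 i ^+ 2).

Definition orthc (R : rcfType) (d : nat) (W : 'M[R]_d) : 'M[R]_d := kermx W^T.

(* w is the orthogonal projection P_W y of y onto the row space of W: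
   w \in W and y - w \in W^perp (this characterizes P_W y uniquely). *)
Definition is_orth_proj (R : rcfType) (d : nat) (W : 'M[R]_d)
  (y w : 'rV[R]_d) : Prop :=
  (w <= W)%MS /\ (y - w <= orthc W)%MS.

Definition convex_set (R : rcfType) (d : nat) (K : 'rV[R]_d -> Prop) : Prop :=
  forall x y (l : R), K x -> K y -> 0 <= l -> l <= 1 ->
    K (l *: x + (1 - l) *: y).

From mathcomp Require Import all_boot all_order all_algebra.
From mathcomp Require Import ring lra.
Import Order.TTheory GRing.Theory Num.Theory.
Local Open Scope ring_scope.
Set Implicit Arguments. Unset Strict Implicit. Unset Printing Implicit Defensive.

(* Let the rows e_1, ..., e_k of E be an orthonormal basis of V^perp.  For each
   l and each sign the hypothesis provides a feasible path z^+-_l ending at a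
   point whose V^perp-component is +-gamma r e_l.  For weights mu in [0,1]^k the
   averages (1/k) sum_l (mu_l z^+_l(t) + (1 - mu_l) z^-_l(t)) lie in K_t by
   convexity, and their V^perp-coordinates are affine in mu with linear part
   B_t.  Every path moves by at most r, so B_t is entrywise 2r-close to
   2 gamma r I and hence diagonally dominant (gamma >= 2k): a unique mu_t puts
   the average in V, and mu_t stays within k / (2 (gamma - k)) of 1/2.  Lengths
   are compared through the V-components of the paths, of norm at most
   gamma' r: a step of the new path costs at most (1/2 + eps) times the steps of
   the z^+-_l plus 2 gamma' r times the variation of mu_t, and diagonal
   dominance bounds that variation by the steps of the z^+-_l as well. *)

Section EuclideanNorm.
Variables (R : rcfType) (d : nat).
Implicit Types (u v w : 'rV[R]_d).

Definition dot u v : R := (u *m v^T) 0 0.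

Lemma dotC u v : dot u v = dot v u.
Proof. by rewrite /dot -[u *m v^T]trmxK trmx_mul trmxK mxE. Qed.

Lemma dotDl u v w : dot (u + v) w = dot u w + dot v w.
Proof. by rewrite /dot mulmxDl mxE. Qed.

Lemma dotBl u v w : dot (u - v) w = dot u w - dot v w.
Proof. by rewrite /dot mulmxBl !mxE. Qed.

Lemma dotZl (a : R) u v : dot (a *: u) v = a * dot u v.
Proof. by rewrite /dot -scalemxAl mxE. Qed.

Lemma dotDr u v w : dot u (v + w) = dot u v + dot u w.
Proof. by rewrite dotC dotDl !(dotC u). Qed.

Lemma dotBr u v w : dot u (v - w) = dot u v - dot u w.
Proof. by rewrite dotC dotBl !(dotC u). Qed.

Lemma dotZr (a : R) u v : dot u (a *: v) = a * dot u v.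
Proof. by rewrite dotC dotZl dotC. Qed.

Lemma dotE u v : dot u v = \sum_i u 0 i * v 0 i.
Proof. by rewrite /dot mxE; apply: eq_bigr => i _; rewrite mxE. Qed.

Lemma dot_ge0 u : 0 <= dot u u.
Proof. by rewrite dotE sumr_ge0 // => i _; rewrite -expr2 sqr_ge0. Qed.

Lemma dot_eq0 u : (dot u u == 0) = (u == 0).
Proof.
apply/idP/eqP => [|->]; last by rewrite /dot mul0mx mxE.
rewrite dotE psumr_eq0 => [/allP u0|i _]; last by rewrite -expr2 sqr_ge0.
apply/rowP => i; have := u0 i (mem_index_enum _).
by rewrite /= -expr2 sqrf_eq0 mxE => /eqP.
Qed.

Lemma enormE u : enorm u = Num.sqrt (dot u u).
Proof. by rewrite /enorm dotE; congr Num.sqrt; apply: eq_bigr => i _; rewrite expr2. Qed.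

Lemma enorm_ge0 u : 0 <= enorm u.
Proof. by rewrite enormE sqrtr_ge0. Qed.

Lemma enorm_sqr u : enorm u ^+ 2 = dot u u.
Proof. by rewrite enormE sqr_sqrtr ?dot_ge0. Qed.

Lemma enorm_eq0 u : (enorm u == 0) = (u == 0).
Proof. by rewrite enormE sqrtr_eq0 le_eqVlt ltNge dot_ge0 orbF dot_eq0. Qed.

Lemma enorm0 : enorm (0 : 'rV[R]_d) = 0.
Proof. by apply/eqP; rewrite enorm_eq0. Qed.

Lemma enormZ (a : R) u : enorm (a *: u) = `|a| * enorm u.
Proof. by rewrite !enormE dotZl dotZr mulrA -expr2 sqrtrM ?sqr_ge0 // sqrtr_sqr. Qed.

Lemma enormN u : enorm (- u) = enorm u.
Proof. by rewrite -scaleN1r enormZ normrN1 mul1r. Qed.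

Lemma cauchy_schwarz u v : dot u v ^+ 2 <= dot u u * dot v v.
Proof.
have [->|vN0] := eqVneq v 0.
  by rewrite /dot linear0 mulmx0 mul0mx mxE expr0n mulr0.
have vv_gt0 : 0 < dot v v by rewrite lt_def dot_eq0 vN0 dot_ge0.
have := dot_ge0 (dot v v *: u - dot u v *: v).
rewrite !(dotBl, dotBr, dotZl, dotZr) (dotC v u) => h.
have : 0 <= dot v v * (dot u u * dot v v - dot u v ^+ 2) by move: h; congr (_ <= _); ring.
by rewrite pmulr_rge0 // subr_ge0.
Qed.

Lemma norm_dot_le u v : `|dot u v| <= enorm u * enorm v.
Proof.
rewrite !enormE -sqrtrM ?dot_ge0 // -sqrtr_sqr ler_sqrt ?cauchy_schwarz //.
by rewrite mulr_ge0 ?dot_ge0.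
Qed.

Lemma ler_enormD u v : enorm (u + v) <= enorm u + enorm v.
Proof.
rewrite -(ler_pXn2r (_ : 0 < 2)%N) ?nnegrE ?enorm_ge0 ?addr_ge0 ?enorm_ge0 //.
rewrite sqrrD !enorm_sqr dotDl !dotDr (dotC v u).
have := norm_dot_le u v; have := ler_norm (dot u v); lra.
Qed.

Lemma ler_enormB u v : enorm (u - v) <= enorm u + enorm v.
Proof. by rewrite -(enormN v) ler_enormD. Qed.

Lemma ler_enorm_sum (I : Type) (s : seq I) (P : pred I) (F : I -> 'rV[R]_d) :
  enorm (\sum_(i <- s | P i) F i) <= \sum_(i <- s | P i) enorm (F i).
Proof.
elim/big_rec2: _ => [|i x y _ le_xy]; first by rewrite enorm0.
by rewrite (le_trans (ler_enormD _ _)) // lerD2l.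
Qed.

Lemma ler_enorm_addr_orth u v : dot u v = 0 -> enorm u <= enorm (u + v).
Proof.
move=> uv0; rewrite !enormE ler_sqrt ?dot_ge0 // dotDl !dotDr (dotC v u) uv0.
by rewrite !addr0 add0r lerDl dot_ge0.
Qed.

End EuclideanNorm.

Section OrthogonalComplement.
Variables (R : rcfType) (d : nat).

Lemma mul_tr_orthc m p (W : 'M[R]_d) (A : 'M_(m, d)) (B : 'M_(p, d)) :
  (A <= W)%MS -> (B <= orthc W)%MS -> A *m B^T = 0.
Proof.
move=> /submxP[X ->]; rewrite /orthc sub_kermx => /eqP BW.
by rewrite -mulmxA -[W *m B^T]trmxK trmx_mul trmxK BW trmx0 mulmx0.
Qed.

Lemma orthc_mul_tr m p (W : 'M[R]_d) (A : 'M_(m, d)) (B : 'M_(p, d)) :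
  (A <= W)%MS -> (B <= orthc W)%MS -> B *m A^T = 0.
Proof. by move=> AW BW; rewrite -[B *m A^T]trmxK trmx_mul trmxK (mul_tr_orthc AW BW) trmx0. Qed.

Lemma mxrank_orthc (W : 'M[R]_d) : \rank (orthc W) = (d - \rank W)%N.
Proof. by rewrite mxrank_ker mxrank_tr. Qed.

Lemma orthcK (W : 'M[R]_d) : (orthc (orthc W) :=: W)%MS.
Proof.
have sub_W : (W <= orthc (orthc W))%MS.
  by rewrite [X in (_ <= X)%MS]/orthc sub_kermx (mul_tr_orthc (submx_refl W)).
apply/eqmx_sym/eqmxP; rewrite -(mxrank_leqif_eq sub_W) !mxrank_orthc.
by rewrite subKn ?rank_leq_col.
Qed.

Lemma coordE k (E : 'M[R]_(k, d)) (z : 'rV_d) j : (z *m E^T) 0 j = dot z (row j E).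
Proof. by rewrite dotE mxE; apply: eq_bigr => i _; rewrite !mxE. Qed.

Lemma mxrank_orthonormal k (E : 'M[R]_(k, d)) : E *m E^T = 1%:M -> \rank E = k.
Proof.
move=> EE; apply/eqP; rewrite eqn_leq rank_leq_row.
by rewrite -{1}(mxrank1 R k) -EE mxrankM_maxl.
Qed.

Lemma normalized_dot (v : 'rV[R]_d) :
  v != 0 -> dot ((enorm v)^-1 *: v) ((enorm v)^-1 *: v) = 1.
Proof.
rewrite -enorm_eq0 => vN0; rewrite dotZl dotZr mulrA -expr2 -enorm_sqr.
by rewrite -exprMn mulVf ?expr1n.
Qed.

Lemma exists_unit_orth k (U : 'M[R]_d) (E : 'M[R]_(k, d)) :
  E *m E^T = 1%:M -> (E <= U)%MS -> (k < \rank U)%N ->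
  exists e : 'rV_d, [/\ (e <= U)%MS, e *m E^T = 0 & e *m e^T = 1%:M].
Proof.
move=> EE EU k_lt_U.
have /row_subPn[i uNE] : ~~ (U <= E)%MS.
  by apply: contraTN k_lt_U => /mxrankS; rewrite (mxrank_orthonormal EE) -leqNgt.
pose v := row i U - row i U *m E^T *m E.
have vE : v *m E^T = 0 by rewrite mulmxBl -!mulmxA EE mulmx1 subrr.
have vN0 : v != 0.
  apply: contraNneq uNE => /eqP; rewrite subr_eq0 => /eqP ->.
  exact: submxMl.
exists ((enorm v)^-1 *: v); split.
- by rewrite scalemx_sub // addmx_sub ?row_sub // eqmx_opp mulmx_sub.
- by rewrite -scalemxAl vE scaler0.
- by rewrite [LHS]mx11_scalar -/(dot _ _) normalized_dot.
Qed.

Lemma exists_orthonormal_rows (U : 'M[R]_d) k : (k <= \rank U)%N ->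
  exists E : 'M[R]_(k, d), E *m E^T = 1%:M /\ (E <= U)%MS.
Proof.
elim: k => [_|k IHk k_lt_U]; first by exists 0; rewrite sub0mx [LHS]flatmx0 [RHS]flatmx0.
have [E [EE EU]] := IHk (ltnW k_lt_U).
have [e [eU eE ee]] := exists_unit_orth EE EU k_lt_U.
rewrite -addn1; exists (col_mx E e); split; last by rewrite col_mx_sub EU.
have Ee : E *m e^T = 0 by rewrite -[E *m e^T]trmxK trmx_mul trmxK eE trmx0.
by rewrite tr_col_mx mul_col_row EE ee eE Ee -scalar_mx_block.
Qed.

Lemma orthonormal_basis (U : 'M[R]_d) (k : nat) : \rank U = k ->
  exists E : 'M[R]_(k, d), E *m E^T = 1%:M /\ (E :=: U)%MS.
Proof.
move=> rkU; have [E [EE EU]] := exists_orthonormal_rows (eq_leq (esym rkU)).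
exists E; split => //; apply/eqmxP; rewrite /eqmx EU /=.
by rewrite -(mxrank_leqif_sup EU) (mxrank_orthonormal EE) rkU.
Qed.

End OrthogonalComplement.

Definition proj_orthc (R : rcfType) k d (E : 'M[R]_(k, d)) : 'M[R]_d := 1%:M - E^T *m E.

Section OrthonormalBasis.
Variables (R : rcfType) (d k : nat) (V : 'M[R]_d) (E : 'M[R]_(k, d)).
Hypotheses (EE : E *m E^T = 1%:M) (EV : (E :=: orthc V)%MS).

Lemma basis_coord l : row l E *m E^T = delta_mx 0 l.
Proof. by rewrite -row_mul EE row1. Qed.

Lemma enorm_basis l : enorm (row l E) = 1.
Proof. by rewrite enormE -coordE basis_coord mxE !eqxx sqrtr1. Qed.

Lemma norm_coord_le (z : 'rV_d) j : `|(z *m E^T) 0 j| <= enorm z.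
Proof. by rewrite coordE (le_trans (norm_dot_le _ _)) // enorm_basis mulr1. Qed.

Lemma sub_coord_eq0 (v : 'rV_d) : (v <= V)%MS = (v *m E^T == 0).
Proof.
apply/idP/eqP => [vV | vE0]; first by apply: mul_tr_orthc vV _; rewrite EV.
rewrite -(orthcK V) [X in (_ <= X)%MS]/orthc sub_kermx.
have /submxP[X ->] : (orthc V <= E)%MS by rewrite EV.
by rewrite trmx_mul mulmxA vE0 mul0mx.
Qed.

Lemma proj_orthc_coord (z : 'rV_d) : z *m proj_orthc E *m E^T = 0.
Proof. by rewrite -mulmxA mulmxBl mul1mx -mulmxA EE mulmx1 subrr mulmx0. Qed.

Lemma proj_orthc_id (v : 'rV_d) : (v <= V)%MS -> v *m proj_orthc E = v.
Proof. by rewrite sub_coord_eq0 => /eqP vE0; rewrite mulmxBr mulmx1 mulmxA vE0 mul0mx subr0. Qed.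

Lemma proj_orthc_eq0 (q : 'rV_d) : (q <= orthc V)%MS -> q *m proj_orthc E = 0.
Proof.
rewrite -EV => /submxP[x ->].
by rewrite -mulmxA mulmxBr mulmx1 mulmxA EE mul1mx subrr mulmx0.
Qed.

Lemma is_orth_projE (y w : 'rV_d) : is_orth_proj V y w -> w = y *m proj_orthc E.
Proof.
case=> wV yw_orth; rewrite -[y](subrK w) mulmxDl proj_orthc_eq0 // add0r.
by rewrite proj_orthc_id.
Qed.

Lemma enorm_proj_orthc_le (z : 'rV_d) : enorm (z *m proj_orthc E) <= enorm z.
Proof.
rewrite [X in _ <= enorm X](_ : z = z *m proj_orthc E + z *m E^T *m E); last first.
  by rewrite mulmxBr mulmx1 mulmxA subrK.
apply: ler_enorm_addr_orth.
by rewrite /dot trmx_mul mulmxA proj_orthc_coord mul0mx mxE.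
Qed.

Lemma is_orth_proj_orthc_coord (y theta : 'rV_d) :
  is_orth_proj (orthc V) y theta -> y *m E^T = theta *m E^T.
Proof.
case=> _ /(orthc_mul_tr (A := E)) yth_E; apply/eqP; rewrite -subr_eq0 -mulmxBl.
by rewrite yth_E // EV.
Qed.

End OrthonormalBasis.

Lemma convex_set_avg (R : rcfType) d (K : 'rV[R]_d -> Prop) n (x : 'I_n -> 'rV[R]_d) :
  convex_set K -> (0 < n)%N -> (forall i, K (x i)) -> K (n%:R^-1 *: \sum_i x i).
Proof.
move=> K_convex; case: n x => // n x _; elim: n x => [|n IHn] x Kx.
  by rewrite big_ord1 invr1 scale1r.
set N : R := n.+1%:R; have N_gt0 : 0 < N by rewrite ltr0n.
pose l : R := N / (N + 1).
have -> : n.+2%:R^-1 = 1 - l by rewrite -natr1 -/N /l; field; lra.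
rewrite big_ord_recr /= scalerDr.
have -> : (1 - l) *: \sum_(i < n.+1) x (widen_ord (leqnSn n.+1) i) =
    l *: (N^-1 *: \sum_(i < n.+1) x (widen_ord (leqnSn n.+1) i)).
  by rewrite scalerA; congr (_ *: _); rewrite /l; field; lra.
apply: K_convex; [exact: IHn | exact: Kx | |].
- by rewrite /l divr_ge0 ?addr_ge0 ?ltW.
- by rewrite /l ler_pdivrMr ?addr_gt0 // mul1r lerDl.
Qed.

Definition mix (R : comPzRingType) p q (m : R) (A B : 'M[R]_(p, q)) := m *: A + (1 - m) *: B.

Lemma mixMl (R : comPzRingType) p q r (m : R) (A B : 'M[R]_(p, q)) (M : 'M_(q, r)) :
  mix m A B *m M = mix m (A *m M) (B *m M).
Proof. by rewrite /mix mulmxDl -!scalemxAl. Qed.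

Lemma mix_subE (R : comPzRingType) p q (m m' : R) (A B C D : 'M[R]_(p, q)) :
  mix m A B - mix m' C D = mix m (A - C) (B - D) + (m - m') *: (C - D).
Proof. by apply/matrixP => i j; rewrite !mxE; ring. Qed.

Lemma enorm_mix_sub_le (R : rcfType) d (m : R) (a b c e : 'rV[R]_d) : 0 <= m <= 1 ->
  enorm (mix m a b - mix m c e) <= m * enorm (a - c) + (1 - m) * enorm (b - e).
Proof.
case/andP=> m_ge0 m_le1; rewrite mix_subE subrr scale0r addr0.
by rewrite (le_trans (ler_enormD _ _)) // !enormZ !ger0_norm ?subr_ge0.
Qed.

Definition path_length (R : rcfType) d (z : nat -> 'rV[R]_d) n :=
  \sum_(0 <= t < n) enorm (z t - z t.+1).

Lemma enorm_sub_le_path_length (R : rcfType) d (z : nat -> 'rV[R]_d) n t :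
  (t <= n)%N -> enorm (z t - z n) <= path_length z n.
Proof.
move=> le_tn; rewrite /path_length (@big_cat_nat _ _ _ t) //=.
rewrite -[X in X <= _]add0r lerD ?sumr_ge0 // => [s _|]; first exact: enorm_ge0.
have -> : z t - z n = \sum_(t <= s < n) (z s - z s.+1).
  by rewrite (telescope_sumr_eq (fun s => - z s)) ?opprK 1?addrC // => s _; rewrite opprK addrC.
exact: ler_enorm_sum.
Qed.

Section DiagonallyDominant.
Variables (R : realFieldType) (k : nat) (B : 'M[R]_k) (a b : R).
Hypotheses (b_ge0 : 0 <= b) (kb_lt_a : k%:R * b < a).
Hypothesis B_near : forall l j, `|B l j - (l == j)%:R * a| <= b.

Lemma diag_dominant_row (x : 'rV[R]_k) j :
  a * `|x 0 j| <= `|(x *m B) 0 j| + b * \sum_l `|x 0 l|.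
Proof.
have a_ge0 : 0 <= a by apply: le_trans (ltW kb_lt_a); rewrite mulr_ge0.
have -> : (x *m B) 0 j = x 0 j * a + \sum_l x 0 l * (B l j - (l == j)%:R * a).
  rewrite mxE (bigD1 j) //= [in RHS](bigD1 j) //= eqxx mul1r addrA -mulrDr subrKC.
  by congr (_ + _); apply: eq_bigr => l /negbTE ->; rewrite mul0r subr0.
set S := \sum_l _; have S_le : `|S| <= b * \sum_l `|x 0 l|.
  rewrite mulr_sumr (le_trans (ler_norm_sum _ _ _)) // ler_sum // => l _.
  by rewrite normrM mulrC ler_wpM2r.
rewrite -{1}(ger0_norm a_ge0) mulrC -normrM -{1}[x 0 j * a](addrK S).
by rewrite (le_trans (ler_normB _ _)) // lerD2l.
Qed.

Lemma diag_dominant_sum (x : 'rV[R]_k) (H : R) : (forall j, `|(x *m B) 0 j| <= H) ->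
  (a - k%:R * b) * \sum_l `|x 0 l| <= k%:R * H.
Proof.
move=> xB_le; set N := \sum_l `|x 0 l|.
have : a * N <= \sum_(j < k) (H + b * N).
  rewrite /N mulr_sumr; apply: ler_sum => j _.
  by apply: le_trans (diag_dominant_row x j) _; rewrite lerD2r.
rewrite sumr_const card_ord -mulr_natl; nra.
Qed.

Lemma diag_dominant_coord (x : 'rV[R]_k) (H : R) j : (forall j, `|(x *m B) 0 j| <= H) ->
  (a - k%:R * b) * `|x 0 j| <= H.
Proof.
move=> xB_le; have c_gt0 : 0 < a - k%:R * b by rewrite subr_gt0.
have a_gt0 : 0 < a by apply: le_lt_trans kb_lt_a; rewrite mulr_ge0.
have row_le := le_trans (diag_dominant_row x j) (lerD (xB_le j) (lexx _)).
have := ler_wpM2l (ltW c_gt0) row_le; have := ler_wpM2l b_ge0 (diag_dominant_sum xB_le).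
by move=> h1 h2; rewrite -(ler_pM2l a_gt0); nra.
Qed.

Lemma diag_dominant_unitmx : B \in unitmx.
Proof.
rewrite -row_free_unit -kermx_eq0; apply/eqP/row_matrixP => i.
rewrite row0; apply/rowP => j; rewrite [RHS]mxE; set x := row i (kermx B).
have xB0 : x *m B = 0 by rewrite -row_mul mulmx_ker row0.
have xB_le l : `|(x *m B) 0 l| <= 0 by rewrite xB0 mxE normr0.
have := diag_dominant_coord j xB_le.
by rewrite pmulr_rle0 ?subr_gt0 // normr_le0 => /eqP.
Qed.

End DiagonallyDominant.

Definition cylinder (R : rcfType) d (V : 'M[R]_d) (h : R) (y : 'rV[R]_d) :=
  exists w, is_orth_proj V y w /\ enorm w <= h.

Definition feasible_path (R : rcfType) d (K : nat -> 'rV[R]_d -> Prop) (V : 'M[R]_d)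
    (h r : R) n (z : nat -> 'rV[R]_d) :=
  (forall t, (t <= n)%N -> K t (z t) /\ cylinder V h (z t)) /\ path_length z n <= r.

Lemma final_constant_le (R : realFieldType) (k g' g : R) : 0 < k -> 0 <= g' -> 2 * k <= g ->
  (g + 2 * k * g') / (g - k) <= 1 + (2 + 4 * g') / g * k.
Proof.
move=> k_gt0 g'_ge0 g_ge; have g_gt0 : 0 < g by lra.
have gk_gt0 : 0 < g - k by lra.
rewrite ler_pdivrMr //.
have -> : (1 + (2 + 4 * g') / g * k) * (g - k) =
    g + 2 * k * g' + k * (g - 2 * k) * (1 + 2 * g') / g by field; rewrite gt_eqF.
by rewrite lerDl divr_ge0 ?mulr_ge0 //; lra.
Qed.

Section Combination.
Variables (R : rcfType) (d k n : nat) (r g' g : R).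
Variables (K : nat -> 'rV[R]_d -> Prop) (V : 'M[R]_d) (E : 'M[R]_(k, d)).
Variables (zp zm : 'I_k -> nat -> 'rV[R]_d).
Hypotheses (k_gt0 : (0 < k)%N) (r_gt0 : 0 < r) (g'_ge0 : 0 <= g') (g_ge : (2 * k)%:R <= g).
Hypothesis K_convex : forall t, (t <= n)%N -> convex_set (K t).
Hypotheses (EE : E *m E^T = 1%:M) (EV : (E :=: orthc V)%MS).
Hypotheses (zp_feasible : forall l, feasible_path K V (g' * r) r n (zp l))
           (zm_feasible : forall l, feasible_path K V (g' * r) r n (zm l)).
Hypotheses (zp_end : forall l, zp l n *m E^T = (g * r) *: delta_mx 0 l)
           (zm_end : forall l, zm l n *m E^T = - (g * r) *: delta_mx 0 l).

Let kR : R := k%:R.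
Let rho := g * r.
Let D := rho - kR * r.
Let P := proj_orthc E.

Lemma kR_gt0 : 0 < kR. Proof. by rewrite ltr0n. Qed.

Lemma kr_le_D : kR * r <= D.
Proof.
have : (2 * kR) * r <= rho by rewrite ler_pM2r // -natrM.
by rewrite /D; lra.
Qed.

Lemma D_gt0 : 0 < D.
Proof. by apply: lt_le_trans kr_le_D; rewrite mulr_gt0 ?kR_gt0. Qed.

Lemma norm_coord_path_le (z : nat -> 'rV[R]_d) t j : path_length z n <= r -> (t <= n)%N ->
  `|((z t - z n) *m E^T) 0 j| <= r.
Proof.
move=> len_le tn; apply: le_trans (norm_coord_le EE _ _) _.
exact: le_trans (enorm_sub_le_path_length z tn) len_le.
Qed.

Lemma enorm_proj_feasible_le (z : nat -> 'rV[R]_d) t :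
  feasible_path K V (g' * r) r n z -> (t <= n)%N -> enorm (z t *m P) <= g' * r.
Proof.
move=> [z_ok _] tn; have [_ [w [pw w_le]]] := z_ok t tn.
by rewrite -(is_orth_projE EE EV pw).
Qed.

Let G t (m : 'rV[R]_k) := \sum_l mix (m 0 l) (zp l t) (zm l t).
Let B t : 'M[R]_k := \matrix_(l, j) (((zp l t - zm l t) *m E^T) 0 j).
Let c t : 'rV[R]_k := \sum_l zm l t *m E^T.

Lemma G_mulmx t (m : 'rV[R]_k) p (M : 'M[R]_(d, p)) :
  G t m *m M = \sum_l mix (m 0 l) (zp l t *m M) (zm l t *m M).
Proof. by rewrite mulmx_suml; apply: eq_bigr => l _; rewrite mixMl. Qed.

Lemma G_coord t (m : 'rV[R]_k) : G t m *m E^T = m *m B t + c t.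
Proof.
rewrite G_mulmx mulmx_sum_row /c -big_split; apply: eq_bigr => l _ /=.
have -> : row l (B t) = (zp l t - zm l t) *m E^T by apply/rowP => j; rewrite !mxE.
by rewrite mulmxBl; apply/rowP => j; rewrite !mxE; ring.
Qed.

Lemma B_near t : (t <= n)%N -> forall l j, `|B t l j - (l == j)%:R * (2 * rho)| <= 2 * r.
Proof.
move=> tn l j; have [[_ zp_len] [_ zm_len]] := (zp_feasible l, zm_feasible l).
have -> : B t l j - (l == j)%:R * (2 * rho) =
    ((zp l t - zp l n) *m E^T) 0 j - ((zm l t - zm l n) *m E^T) 0 j.
  rewrite [B t l j]mxE !mulmxBl zp_end zm_end !mxE eqxx /= (eq_sym j l) /rho; ring.
have := norm_coord_path_le j zp_len tn; have := norm_coord_path_le j zm_len tn.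
by move=> h1 h2; rewrite (le_trans (ler_normB _ _)) //; lra.
Qed.

Lemma two_r_ge0 : 0 <= 2 * r. Proof. by rewrite mulr_ge0 // ltW. Qed.

Lemma two_kr_lt_two_rho : k%:R * (2 * r) < 2 * rho.
Proof. have := D_gt0; rewrite /D -/kR; lra. Qed.

Lemma two_D_E : 2 * rho - k%:R * (2 * r) = 2 * D.
Proof. by rewrite /D /kR; ring. Qed.

Lemma B_unit t : (t <= n)%N -> B t \in unitmx.
Proof. by move=> tn; apply: diag_dominant_unitmx two_r_ge0 two_kr_lt_two_rho (B_near tn). Qed.

Lemma B_coord_le t (x : 'rV[R]_k) (H : R) j : (t <= n)%N ->
  (forall j, `|(x *m B t) 0 j| <= H) -> 2 * D * `|x 0 j| <= H.
Proof.
move=> tn; rewrite -two_D_E.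
exact: (diag_dominant_coord two_r_ge0 two_kr_lt_two_rho (B_near tn)).
Qed.

Lemma B_sum_le t (x : 'rV[R]_k) (H : R) : (t <= n)%N ->
  (forall j, `|(x *m B t) 0 j| <= H) -> 2 * D * \sum_l `|x 0 l| <= kR * H.
Proof.
move=> tn; rewrite -two_D_E.
exact: (diag_dominant_sum two_r_ge0 two_kr_lt_two_rho (B_near tn)).
Qed.

Let mu t : 'rV[R]_k := - c t *m invmx (B t).

Lemma sub_mu_mul t (m : 'rV[R]_k) : (t <= n)%N -> (m - mu t) *m B t = G t m *m E^T.
Proof. by move=> tn; rewrite mulmxBl /mu mulmxKV ?B_unit // G_coord opprK. Qed.

Lemma G_mu_coord t : (t <= n)%N -> G t (mu t) *m E^T = 0.
Proof. by move=> tn; rewrite -sub_mu_mul // subrr mul0mx. Qed.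

Lemma norm_coord_G_sub_le (t s : nat) (m : 'rV[R]_k) j : (forall l, 0 <= m 0 l <= 1) ->
  `|((G t m - G s m) *m E^T) 0 j| <=
  \sum_l (m 0 l * enorm (zp l t - zp l s) + (1 - m 0 l) * enorm (zm l t - zm l s)).
Proof.
move=> m01; apply: le_trans (norm_coord_le EE _ _) _.
rewrite /G -sumrB (le_trans (ler_enorm_sum _ _ _)) // ler_sum // => l _.
exact: enorm_mix_sub_le.
Qed.

Let eps := kR * r / (2 * D).

Lemma mu_near_half t l : (t <= n)%N -> `|mu t 0 l - 2^-1| <= eps.
Proof.
move=> tn; pose h : 'rV[R]_k := const_mx 2^-1.
have h01 l' : 0 <= h 0 l' <= 1.
  by rewrite mxE invr_ge0 ler0n /= invf_le1 ?ltr0n // ler1n.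
have Gn : G n h *m E^T = 0.
  rewrite G_mulmx big1 // => l' _; rewrite zp_end zm_end /mix; apply/rowP => j.
  by rewrite !mxE; field.
have hB : (h - mu t) *m B t = (G t h - G n h) *m E^T by rewrite sub_mu_mul // mulmxBl Gn subr0.
rewrite /eps ler_pdivlMr ?mulr_gt0 ?D_gt0 // mulrC distrC.
rewrite (_ : 2^-1 - mu t 0 l = (h - mu t) 0 l); last by rewrite !mxE.
apply: (B_coord_le _ tn).
move=> j; rewrite hB (le_trans (norm_coord_G_sub_le _ _ _ h01)) //.
have -> : kR * r = \sum_(l' < k) r by rewrite sumr_const card_ord mulr_natl.
rewrite ler_sum // => l' _; rewrite mxE.
have [[_ zp_len] [_ zm_len]] := (zp_feasible l', zm_feasible l').
have := le_trans (enorm_sub_le_path_length (zp l') tn) zp_len.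
have := le_trans (enorm_sub_le_path_length (zm l') tn) zm_len.
lra.
Qed.

Lemma mu_bounds t l : (t <= n)%N ->
  [/\ 0 <= mu t 0 l <= 1, mu t 0 l <= 2^-1 + eps & 1 - mu t 0 l <= 2^-1 + eps].
Proof.
move=> tn; have := mu_near_half l tn; rewrite ler_norml => /andP[lo hi].
have eps_le : eps <= 2^-1.
  by rewrite /eps ler_pdivrMr ?mulr_gt0 ?D_gt0 // mulrA mulVf ?pnatr_eq0 // mul1r kr_le_D.
move: (mu t 0 l) (eps) lo hi eps_le => x e lo hi e_le.
by split; [apply/andP; split|..]; lra.
Qed.

Let step t := \sum_l (enorm (zp l t - zp l t.+1) + enorm (zm l t - zm l t.+1)).

Lemma sum_mu_step_le t : (t < n)%N ->
  2 * D * \sum_l `|mu t 0 l - mu t.+1 0 l| <= kR * step t.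
Proof.
move=> tn; pose m := mu t.+1.
have m01 l : 0 <= m 0 l <= 1 by have [] := mu_bounds l tn.
have mB : (m - mu t) *m B t = (G t m - G t.+1 m) *m E^T.
  by rewrite sub_mu_mul ?(ltnW tn) // mulmxBl G_mu_coord // subr0.
rewrite (eq_bigr (fun l => `|(m - mu t) 0 l|)) => [|l _]; last first.
  by rewrite distrC [(m - mu t) 0 l]mxE [(- mu t) 0 l]mxE.
apply: (B_sum_le (ltnW tn)) => j; rewrite mB.
rewrite (le_trans (norm_coord_G_sub_le _ _ _ m01)) // ler_sum // => l _.
have [m_ge0 m_le1] := andP (m01 l).
by rewrite lerD // ler_piMl ?enorm_ge0 // ?subr_ge0 // lerBlDr lerDl.
Qed.

Let Y t := kR^-1 *: G t (mu t).

Lemma Y_K t : (t <= n)%N -> K t (Y t).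
Proof.
move=> tn; apply: convex_set_avg (K_convex tn) k_gt0 _ => l.
have [/andP[mu_ge0 mu_le1] _ _] := mu_bounds l tn.
have [[zp_K _] [zm_K _]] := (zp_feasible l, zm_feasible l).
by apply: K_convex => //; [exact: (zp_K t tn).1 | exact: (zm_K t tn).1].
Qed.

Lemma Y_sub t : (t <= n)%N -> (Y t <= V)%MS.
Proof. by move=> tn; rewrite (sub_coord_eq0 EV) -scalemxAl G_mu_coord // scaler0. Qed.

Lemma enorm_mix_proj_step_le t l : (t < n)%N ->
  enorm (mix (mu t 0 l) (zp l t *m P) (zm l t *m P) -
         mix (mu t.+1 0 l) (zp l t.+1 *m P) (zm l t.+1 *m P)) <=
  (2^-1 + eps) * (enorm (zp l t - zp l t.+1) + enorm (zm l t - zm l t.+1)) +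
  2 * (g' * r) * `|mu t 0 l - mu t.+1 0 l|.
Proof.
move=> tn; have [/andP[mu_ge0 mu_le1] mu_le mu_ge] := mu_bounds l (ltnW tn).
rewrite mix_subE (le_trans (ler_enormD _ _)) // lerD //.
  rewrite /mix (le_trans (ler_enormD _ _)) // !enormZ !ger0_norm ?subr_ge0 // mulrDr.
  by rewrite lerD // ler_pM ?subr_ge0 ?enorm_ge0 // -mulmxBl enorm_proj_orthc_le.
rewrite enormZ mulrC ler_wpM2r // (le_trans (ler_enormB _ _)) // mulr_natl mulr2n.
by rewrite lerD // enorm_proj_feasible_le.
Qed.

Lemma enorm_Y_sub_le t : (t < n)%N -> enorm (Y t - Y t.+1) <=
  kR^-1 * ((2^-1 + eps) * step t + 2 * (g' * r) * \sum_l `|mu t 0 l - mu t.+1 0 l|).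
Proof.
move=> tn; have YV : (Y t - Y t.+1 <= V)%MS.
  by rewrite addmx_sub ?eqmx_opp ?Y_sub // ltnW.
have kR_inv_ge0 : 0 <= kR^-1 by rewrite invr_ge0 ltW ?kR_gt0.
rewrite -(proj_orthc_id EV YV) /Y -scalerBr -scalemxAl enormZ ger0_norm // ler_wpM2l //.
rewrite mulmxBl !G_mulmx -sumrB (le_trans (ler_enorm_sum _ _ _)) //.
rewrite /step mulr_sumr mulr_sumr -big_split ler_sum // => l _.
exact: enorm_mix_proj_step_le.
Qed.

Let cst := kR^-1 * (2^-1 + eps) + g' * r / D.

Lemma enorm_Y_sub_le_step t : (t < n)%N -> enorm (Y t - Y t.+1) <= cst * step t.
Proof.
move=> tn; apply: le_trans (enorm_Y_sub_le tn) _.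
have [kR_pos D_pos] := (kR_gt0, D_gt0); set S := \sum_l _.
have -> : cst * step t = kR^-1 * ((2^-1 + eps) * step t) + g' * r / D * step t.
  by rewrite /cst; ring.
rewrite mulrDr lerD2l.
have -> : kR^-1 * (2 * (g' * r) * S) = g' * r / (kR * D) * (2 * D * S).
  by field; rewrite !gt_eqF.
have -> : g' * r / D * step t = g' * r / (kR * D) * (kR * step t) by field; rewrite !gt_eqF.
by rewrite ler_wpM2l ?sum_mu_step_le // divr_ge0 ?mulr_ge0 // ltW.
Qed.

Lemma sum_step_le : \sum_(0 <= t < n) step t <= 2 * kR * r.
Proof.
rewrite /step exchange_big /=.
have -> : 2 * kR * r = \sum_(l < k) (r + r) by rewrite sumr_const card_ord -mulr_natr /kR; ring.
rewrite ler_sum // => l _; rewrite big_split lerD //.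
  exact: (zp_feasible l).2.
exact: (zm_feasible l).2.
Qed.

Lemma path_length_Y_le : path_length Y n <= cst * (2 * kR * r).
Proof.
have [kR_ge0 D_ge0] := (ltW kR_gt0, ltW D_gt0).
have eps_ge0 : 0 <= eps by rewrite divr_ge0 ?mulr_ge0 // ltW.
have cst_ge0 : 0 <= cst by rewrite addr_ge0 ?mulr_ge0 ?divr_ge0 ?addr_ge0 ?invr_ge0 // ltW.
apply: le_trans (ler_sum_nat (fun t tn => enorm_Y_sub_le_step (proj2 (andP tn)))) _.
by rewrite -mulr_sumr ler_wpM2l // sum_step_le.
Qed.

Lemma exists_path_in_V : exists Y : nat -> 'rV[R]_d,
  (forall t, (t <= n)%N -> K t (Y t) /\ (Y t <= V)%MS) /\
  path_length Y n <= (1 + (2 + 4 * g') / g * kR) * r.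
Proof.
exists Y; split => [t tn|]; first by split; [exact: Y_K | exact: Y_sub].
apply: le_trans path_length_Y_le _.
have kR_pos := kR_gt0; have gk_gt0 : 0 < g - kR.
  by have := D_gt0; rewrite /D /rho -mulrBl pmulr_lgt0.
have -> : cst * (2 * kR * r) = (g + 2 * kR * g') / (g - kR) * r.
  by rewrite /cst /eps /D /rho; field; rewrite -?mulrBl ?mulf_neq0 ?gt_eqF.
by rewrite ler_wpM2r ?final_constant_le ?(ltW r_gt0) // /kR -natrM.
Qed.

End Combination.

Lemma exists_paths_to_basis (R : rcfType) d k n (K : nat -> 'rV[R]_d -> Prop)
    (V : 'M[R]_d) (E : 'M[R]_(k, d)) (h r rho s : R) :
  E *m E^T = 1%:M -> (E :=: orthc V)%MS -> 0 <= rho -> `|s| = 1 ->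
  (forall theta : 'rV[R]_d, (theta <= orthc V)%MS -> enorm theta = rho ->
     exists y, (cylinder V h y /\ exists z, z n = y /\ feasible_path K V h r n z) /\
       is_orth_proj (orthc V) y theta) ->
  exists z : 'I_k -> nat -> 'rV[R]_d, forall l,
    feasible_path K V h r n (z l) /\ z l n *m E^T = (s * rho) *: delta_mx 0 l.
Proof.
move=> EE EV rho_ge0 s1 reach.
suff /fin_all_exists : forall l, exists z : nat -> 'rV[R]_d,
  feasible_path K V h r n z /\ z n *m E^T = (s * rho) *: delta_mx 0 l by [].
move=> l.
have theta_sub : ((s * rho) *: row l E <= orthc V)%MS by rewrite scalemx_sub // -EV row_sub.
have theta_norm : enorm ((s * rho) *: row l E) = rho.
  by rewrite enormZ (enorm_basis EE) mulr1 normrM s1 mul1r ger0_norm.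
have [y [[_ [z [zn z_feasible]]] y_proj]] := reach _ theta_sub theta_norm.
exists z; split => //.
by rewrite zn (is_orth_proj_orthc_coord EV y_proj) -scalemxAl basis_coord.
Qed.

(* Indices t = 1..T of the paper are shifted to t = 0..T-1. *)
Theorem lemma9 (R : rcfType) (d k T : nat) (r gamma' gamma : R)
  (K : nat -> 'rV[R]_d -> Prop) (V : 'M[R]_d) :
  (1 <= k)%N -> (k <= d)%N ->
  0 < r -> 0 <= gamma' -> (12 * k)%:R <= gamma ->
  (forall t, (t < T)%N -> convex_set (K t)) ->
  \rank V = (d - k)%N ->
  let C := fun y : 'rV[R]_d =>
    exists w, is_orth_proj V y w /\ enorm w <= gamma' * r in
  let Omega := fun y : 'rV[R]_d =>
    C y /\ exists ys : nat -> 'rV[R]_d,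
      ys T.-1 = y /\
      (forall t, (t < T)%N -> K t (ys t) /\ C (ys t)) /\
      \sum_(0 <= t < T.-1) enorm (ys t - ys t.+1) <= r in
  (forall theta : 'rV[R]_d, (theta <= orthc V)%MS -> enorm theta = gamma * r ->
     exists y, Omega y /\ is_orth_proj (orthc V) y theta) ->
  exists Y : nat -> 'rV[R]_d,
    (forall t, (t < T)%N -> K t (Y t) /\ (Y t <= V)%MS) /\
    \sum_(0 <= t < T.-1) enorm (Y t - Y t.+1)
      <= (1 + (2 + 4 * gamma') / gamma * k%:R) * r.
Proof.
move=> k_gt0 k_le_d r_gt0 g'_ge0 g_ge K_convex rkV.
have g_gt0 : 0 < gamma by apply: lt_le_trans g_ge; rewrite ltr0n muln_gt0.
case: T K_convex => [|n] K_convex C Omega reach /=.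
  exists (fun=> 0); split => //; rewrite big_geq //.
  have slope_ge0 : 0 <= (2 + 4 * gamma') / gamma * k%:R.
    by rewrite mulr_ge0 ?divr_ge0 ?addr_ge0 ?mulr_ge0 ?ler0n // ltW.
  by rewrite mulr_ge0 ?addr_ge0 // ltW.
have rk_orthc : \rank (orthc V) = k by rewrite mxrank_orthc rkV subKn.
have [E [EE EV]] := orthonormal_basis rk_orthc.
have rho_ge0 : 0 <= gamma * r by rewrite mulr_ge0 ?ltW.
have [zp zp_ok] := exists_paths_to_basis EE EV rho_ge0 (normr1 _) reach.
have [zm zm_ok] := exists_paths_to_basis EE EV rho_ge0 (normrN1 _) reach.
apply: (exists_path_in_V (E := E) (zp := zp) (zm := zm)) => //.
- by apply: le_trans g_ge; rewrite ler_nat leq_mul2r ?k_gt0 orbT.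
- by move=> l; have [] := zp_ok l.
- by move=> l; have [] := zm_ok l.
- by move=> l; have [_ ->] := zp_ok l; rewrite mul1r.
- by move=> l; have [_ ->] := zm_ok l; rewrite mulN1r.
Qed.
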